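(* Let $t \geq 4$ be an integer and let $G$ be a finite, simple, connected graph that contains no hole of length at least $t$. Then $t-3$ cops have a winning strategy in the game of cops and robbers on $G$; that is, $c(G) \leq t-3$.
   Context: A hole in a graph is an induced cycle of length at least $4$. The game of cops and robbers on a graph $G$ with $k$ cops is played as follows: each cop chooses a starting vertex, then the single robber chooses a starting vertex; then the players alternate turns, starting with the cops. On the cops' turn, each cop either stays on its vertex or moves to an adjacent vertex; on the robber's turn, the robber stays on his vertex or moves to an adjacent vertex. Both sides have full information. The cops win if at some point a cop occupies the same vertex as the robber; the robber wins if he avoids capture forever. The cop number $c(G)$ is the minimum $k$ such that $k$ cops have a winning strategy on $G$. All graphs are finite, simple and connected. *)

From mathcomp Require Import all_boot.
Set Implicit Arguments. Unset Strict Implicit. Unset Printing Implicit Defensive.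

Section CopsRobbers.
Variables (T : finType) (e : rel T).

Definition simple_graph : Prop := symmetric e /\ irreflexive e.

Definition connected_graph : Prop := 0 < #|T| /\ forall x y : T, connect e x y.

Definition is_hole (n : nat) (f : 'I_n -> T) : Prop :=
  4 <= n /\ injective f /\
  forall i j : 'I_n,
    e (f i) (f j) = ((val j == (val i).+1 %% n) || (val i == (val j).+1 %% n)).

Definition step_ok (x y : T) : bool := (y == x) || e x y.

Definition cops_move (k : nat) (C C' : {ffun 'I_k -> T}) : Prop :=
  forall i, step_ok (C i) (C' i).

Definition caught (k : nat) (C : {ffun 'I_k -> T}) (r : T) : Prop :=
  exists i, C i = r.

(* cops_win C r : it is the cops' turn, cops at C, robber at r, and the cops
   can force a capture (in finitely many rounds) against every robber play. *)
Inductive cops_win (k : nat) : {ffun 'I_k -> T} -> T -> Prop :=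
| cw_caught : forall C r, caught C r -> cops_win C r
| cw_step : forall C r C', cops_move C C' ->
    (caught C' r \/ (forall r', step_ok r r' -> cops_win C' r')) ->
    cops_win C r.

Definition k_cops_win (k : nat) : Prop :=
  exists C : {ffun 'I_k -> T}, forall r : T, cops_win C r.

End CopsRobbers.

From mathcomp Require Import all_boot zify.
Set Implicit Arguments. Unset Strict Implicit. Unset Printing Implicit Defensive.

(* The cops play the Gyarfas path argument.  They occupy an induced path
   P = p_1 ... p_m with m <= k = t - 3 (surplus cops stand on its end p), the
   robber is in a component C of G - N[P], and p has a neighbour reachable
   from C in G - N[P - p].  Hence some u in N(p) - N[P - p] has a neighbour in
   C, and the cops extend P by u; if P already has k vertices they slide one
   step along P + u, abandoning p_1.  The robber's component then shrinks
   strictly (it loses the neighbour of u), so he is eventually caught.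
   Abandoning p_1 is safe: a vertex adjacent to C whose only neighbour on
   P + u is p_1 would close, with an induced path through C to u and with P,
   a hole of length >= k + 3. *)

Section Connect.
Variables (T : finType) (R : rel T).

Lemma connect_closed (X : pred T) a b :
  (forall x y, X x -> R x y -> X y) -> X a -> connect R a b -> X b.
Proof.
move=> XR Xa /connectP [p pth ->].
elim: p a Xa pth => [|z p IH] a Xa //= /andP [Raz pth].
exact: IH (XR _ _ Xa Raz) pth.
Qed.

Lemma connect_exit (X : pred T) a b : X a -> connect R a b -> ~~ X b ->
  exists z y, [/\ X z, ~~ X y, R z y & connect R a z].
Proof.
move=> Xa /connectP [p pth ->].
elim: p a Xa pth => [|x p IH] a Xa /=; first by rewrite Xa.
case/andP => Rax pth nXl; case Xx: (X x).
- have [z [y [Xz nXy Rzy Cxz]]] := IH x Xx pth nXl.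
  by exists z, y; split => //; apply: connect_trans Cxz; apply: connect1.
- by exists a, x; rewrite Xx.
Qed.

End Connect.

Section InducedPaths.
Variables (T : finType) (x0 : T) (R : rel T).
Hypotheses (Rsym : symmetric R) (Rirr : irreflexive R).

Definition induced_path (s : seq T) := forall i j, i < size s -> j < size s ->
  R (nth x0 s i) (nth x0 s j) = (j == i.+1) || (i == j.+1).

Lemma induced_path_intro s :
  (forall i, i.+1 < size s -> R (nth x0 s i) (nth x0 s i.+1)) ->
  (forall i j, i.+1 < j -> j < size s -> ~~ R (nth x0 s i) (nth x0 s j)) ->
  induced_path s.
Proof.
move=> adj chord i j hi hj.
wlog ij : i j hi hj / i <= j.
  by move=> W; case: (leqP i j) => h; [|rewrite Rsym orbC]; apply: W => //; lia.
case: (ltngtP i j) => [lt_ij | | ->]; [ | lia | by rewrite Rirr; lia].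
case: (eqVneq j i.+1) => [ji|ne]; first by subst j; rewrite adj ?eqxx.
by rewrite (negbTE (chord i j _ hj)); lia.
Qed.

Lemma induced_path_behead s : induced_path s -> induced_path (behead s).
Proof. by move=> sP i j; rewrite size_behead !nth_behead => hi hj; rewrite sP; lia. Qed.

Lemma induced_path_rcons s p u : induced_path (rcons s p) -> R p u ->
  {in s, forall v, ~~ R v u} -> induced_path (rcons (rcons s p) u).
Proof.
move=> sP pu su i j; rewrite size_rcons => hi hj.
wlog ij : i j hi hj / i <= j.
  by move=> W; case: (leqP i j) => h; [|rewrite Rsym orbC]; apply: W => //; lia.
rewrite !(nth_rcons x0 (rcons s p)).
case: (ltnP j (size (rcons s p))) => hj'.
  by rewrite (leq_ltn_trans ij hj') sP // (leq_ltn_trans ij hj').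
have -> : j = size (rcons s p) by lia.
rewrite eqxx; case: (ltnP i (size (rcons s p))) => hi'; last first.
  have -> : i = size (rcons s p) by lia.
  by rewrite eqxx Rirr; lia.
move: hi'; rewrite nth_rcons size_rcons => hi'.
case: (ltnP i (size s)) => his; first by rewrite (negbTE (su _ (mem_nth x0 his))); lia.
have -> : i = size s by lia.
by rewrite eqxx pu; lia.
Qed.

Definition walk a b c := [/\ 0 < size c, nth x0 c 0 = a, nth x0 c (size c).-1 = b &
  forall i, i.+1 < size c -> step_ok R (nth x0 c i) (nth x0 c i.+1)].

Lemma connect_walk a b : connect R a b -> exists c, walk a b c.
Proof.
case/connectP => p pth ->; exists (a :: p); split => //=.
- exact: (nth_last x0 (a :: p)).
- by move=> i hi; apply/orP; right; apply: (pathP x0 pth).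
Qed.

Lemma walk_splice a b c i j : walk a b c -> i < j -> j < size c ->
  (i = 0 -> nth x0 c j = a) -> (0 < i -> step_ok R (nth x0 c i.-1) (nth x0 c j)) ->
  walk a b (take i c ++ drop j c) /\ size (take i c ++ drop j c) < size c.
Proof.
case=> c0 ca cb cs ij jc j_head j_next.
have sz : size (take i c ++ drop j c) = i + (size c - j).
  by rewrite size_cat size_drop size_takel //; lia.
have nthE m : nth x0 (take i c ++ drop j c) m =
    if m < i then nth x0 c m else nth x0 c (j + (m - i)).
  rewrite nth_cat size_takel; last lia.
  by case: ifP => mi; [rewrite nth_take | rewrite nth_drop].
split; last by rewrite sz; lia.
split.
- by rewrite sz; lia.
- by rewrite nthE; case: ifP => // i0; rewrite addn0; apply: j_head; lia.
- rewrite nthE sz; case: ifP => h; first lia.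
  by have -> : j + ((i + (size c - j)).-1 - i) = (size c).-1 by lia.
- move=> m; rewrite sz => hm; rewrite !nthE.
  case: (ltnP m.+1 i) => h1; first by rewrite (ltn_trans (ltnSn m) h1); apply: cs; lia.
  case: (ltnP m i) => h2; last first.
    have -> : j + (m.+1 - i) = (j + (m - i)).+1 by lia.
    by apply: cs; lia.
  have -> : m.+1 - i = 0 by lia.
  by rewrite addn0 (_ : m = i.-1); [apply: j_next | ]; lia.
Qed.

Definition chordless c := forall i j, i < j -> j < size c ->
  nth x0 c i != nth x0 c j /\ (i.+1 < j -> ~~ R (nth x0 c i) (nth x0 c j)).

(* A repeated vertex or a chord lets [walk_splice] shorten the walk. *)
Lemma walk_chordless a b c : walk a b c -> exists2 c', walk a b c' & chordless c'.
Proof.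
move=> W; have [n lt_n] := ubnP (size c).
elim: n => // n IH in c lt_n W *.
have [c0 ca _ cs] := W.
case: (boolP [exists i : 'I_(size c), exists j : 'I_(size c), (i < j) &&
   ((nth x0 c i == nth x0 c j) || ((i.+1 < j) && R (nth x0 c i) (nth x0 c j)))]).
- case/existsP => i /existsP [j /andP [ij /orP [/eqP eqij | /andP [ij1 Rij]]]].
  + have j_head : (i : nat) = 0 -> nth x0 c j = a by move=> i0; rewrite -eqij i0.
    have j_next : 0 < i -> step_ok R (nth x0 c i.-1) (nth x0 c j).
      by move=> i0; rewrite -eqij; have := cs i.-1; rewrite prednK //; apply.
    have [W' lt] := walk_splice W ij (ltn_ord j) j_head j_next.
    by apply: IH W'; lia.
  + have j_next : 0 < i.+1 -> step_ok R (nth x0 c i.+1.-1) (nth x0 c j).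
      by move=> _; apply/orP; right.
    have [W' lt] := walk_splice W ij1 (ltn_ord j) (fun i0 => ltac:(discriminate)) j_next.
    by apply: IH W'; lia.
- move=> none; exists c => // i j ij jc.
  have ic : i < size c by lia.
  move: none; rewrite negb_exists => /forallP /(_ (Ordinal ic)).
  rewrite negb_exists => /forallP /(_ (Ordinal jc)) /=.
  by rewrite ij /= negb_or => /andP [-> nR]; split => // ij1; move: nR; rewrite ij1.
Qed.

Lemma connect_induced_path a b : connect R a b ->
  exists s, [/\ head x0 s = a, last x0 s = b, uniq s & induced_path s].
Proof.
move=> /connect_walk [c /walk_chordless [s [s0 sa sb ss] cs]].
exists s; split => //; first by rewrite -nth_last.
- apply/(uniqP x0) => i j; rewrite !inE => hi hj eqij.
  by case: (ltngtP i j) => // ij; [case: (cs i j) | case: (cs j i)]; rewrite // eqij eqxx.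
- apply: induced_path_intro => [i hi | i j ij hj]; last exact: (cs i j (ltnW ij) hj).2.
  by have [ne _] := cs i i.+1 (ltnSn i) hi; move: (ss i hi); rewrite /step_ok eq_sym (negbTE ne).
Qed.

End InducedPaths.

Section Neighbourhoods.
Variables (T : finType) (e : rel T).
Hypotheses (esym : symmetric e) (eirr : irreflexive e).

(* [nbhd S] is the closed neighbourhood N[S] and [off S] the graph G - N[S]. *)
Definition nbhd (S : seq T) x := has (step_ok e ^~ x) S.
Definition within (A : pred T) : rel T := [rel x y | [&& A x, A y & e x y]].
Definition off S := within [pred x | ~~ nbhd S x].

Lemma nbhd_rcons S a x : nbhd (rcons S a) x = step_ok e a x || nbhd S x.
Proof. by rewrite /nbhd has_rcons. Qed.

Lemma nbhd_cons S a x : nbhd (a :: S) x = step_ok e a x || nbhd S x.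
Proof. by []. Qed.

Lemma mem_nbhd S x : x \in S -> nbhd S x.
Proof. by move=> xS; apply/hasP; exists x; rewrite // /step_ok eqxx. Qed.

Lemma nbhd_subset S S' x : {subset S <= S'} -> nbhd S x -> nbhd S' x.
Proof. by move=> sub /hasP [v /sub vS' vx]; apply/hasP; exists v. Qed.

Lemma nbhd_nonadj S x v : ~~ nbhd S x -> v \in S -> ~~ e v x.
Proof. by move=> /hasPn nx /nx; rewrite /step_ok negb_or => /andP []. Qed.

Lemma within_sym A : symmetric (within A).
Proof. by move=> x y; rewrite /within /= esym; case: (A x); case: (A y). Qed.

Lemma within_irr A : irreflexive (within A).
Proof. by move=> x; rewrite /within /= eirr !andbF. Qed.

Lemma connect_within_closed (A : pred T) a b : A a -> connect (within A) a b -> A b.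
Proof. by apply: connect_closed => x y _ /and3P []. Qed.

Lemma off_closed S a b : ~~ nbhd S a -> connect (off S) a b -> ~~ nbhd S b.
Proof. exact: connect_within_closed. Qed.

Lemma connect_within_sub (A B : pred T) a b :
  (forall x, A x -> B x) -> connect (within A) a b -> connect (within B) a b.
Proof.
move=> AB; apply: connect_sub => x y /and3P [Ax Ay exy].
by apply: connect1; rewrite /within /= !AB.
Qed.

Lemma connect_off_sub S S' a b :
  {subset S <= S'} -> connect (off S') a b -> connect (off S) a b.
Proof. by move=> sub; apply: connect_within_sub => x; apply: contra; apply: nbhd_subset. Qed.

Variable x0 : T.

Lemma within_induced_path (A : pred T) a b : A a -> connect (within A) a b ->
  exists s, [/\ head x0 s = a, last x0 s = b, uniq s, all A s & induced_path x0 e s].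
Proof.
move=> Aa /(connect_induced_path x0 (@within_sym A) (@within_irr A)) [s [sa sb us sP]].
have As : all A s.
  apply/(all_nthP x0) => i hi.
  have [s1 | s_gt1] := leqP (size s) 1.
    by rewrite (_ : i = 0) ?nth0 ?sa //; lia.
  have [hi1 | hi1] := ltnP i.+1 (size s).
    by have := sP i i.+1 hi hi1; rewrite eqxx => /and3P [].
  have hp : i.-1 < size s by lia.
  by have := sP i.-1 i hp hi; rewrite prednK ?eqxx //=; [case/and3P | lia].
exists s; split => // i j hi hj; rewrite -sP // /within /=.
by rewrite (all_nthP x0 As) // (all_nthP x0 As).
Qed.

End Neighbourhoods.

Section Holes.
Variables (T : finType) (e : rel T) (x0 : T).
Hypotheses (esym : symmetric e) (eirr : irreflexive e).
Local Notation induced_path := (induced_path x0 e).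
Local Notation nbhd := (nbhd e).

Lemma eqn_succ_mod n i j : i < n -> j < n ->
  (j == i.+1 %% n) = (j == i.+1) || ((i.+1 == n) && (j == 0)).
Proof.
move=> hi hj; case: (ltngtP i.+1 n) => h; first by rewrite modn_small //; lia.
- lia.
- by move: hj; rewrite -h modnn; lia.
Qed.

Lemma glue_hole s q : uniq (s ++ q) -> induced_path s -> induced_path q ->
  2 < size s -> 0 < size q ->
  {in q, forall v, e (head x0 s) v = (v == last x0 q)} ->
  {in q, forall v, e (last x0 s) v = (v == head x0 q)} ->
  (forall i, 0 < i < (size s).-1 -> ~~ nbhd q (nth x0 s i)) ->
  is_hole e (fun i : 'I_(size (s ++ q)) => nth x0 (s ++ q) i).
Proof.
move=> sq_uniq s_ind q_ind s3 q0 hd tl mid.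
have q_uniq : uniq q by move: sq_uniq; rewrite cat_uniq => /and3P [].
have q_last : (size q).-1 < size q by lia.
have hdE m : m < size q -> e (nth x0 s 0) (nth x0 q m) = (m == (size q).-1).
  by move=> hm; rewrite hd ?mem_nth // -nth_last nth_uniq.
have tlE m : m < size q -> e (nth x0 s (size s).-1) (nth x0 q m) = (m == 0).
  by move=> hm; rewrite nth_last tl ?mem_nth // -nth0 nth_uniq.
have midE i m : 0 < i -> i < (size s).-1 -> m < size q -> ~~ e (nth x0 s i) (nth x0 q m).
  by move=> i0 il hm; rewrite esym; apply: nbhd_nonadj (mem_nth x0 hm); apply: mid; rewrite i0.
split; first by rewrite size_cat; lia.
split=> [i j /eqP | [i hi] [j hj] /=]; first by rewrite nth_uniq // => /eqP /val_inj.
move: hi hj; rewrite size_cat => hi hj.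
wlog ij : i j hi hj / i <= j.
  by move=> W; case: (leqP i j) => h; [|rewrite esym orbC]; apply: W => //; lia.
rewrite !eqn_succ_mod // !nth_cat.
set ns := size s in hi hj s3 tlE midE *; set nq := size q in hi hj q_last hdE *.
case: (ltnP i ns) => hi'; case: (ltnP j ns) => hj'.
- by rewrite s_ind //; lia.
- have [i0|ip] := posnP i; first by rewrite i0 hdE; lia.
  have [il|il] := eqVneq i ns.-1; first by rewrite il tlE; lia.
  by rewrite (negbTE (midE _ _ ip _ _)); lia.
- lia.
- by rewrite q_ind -/nq; lia.
Qed.

(* The detour is shortened to an induced path, whose interior avoids N[q]. *)
Lemma detour_hole q a b : uniq q -> induced_path q -> 0 < size q ->
  a \notin q -> b \notin q ->
  {in q, forall v, e a v = (v == last x0 q)} -> {in q, forall v, e b v = (v == head x0 q)} ->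
  a != b -> ~~ e a b ->
  connect (within e [pred v | ~~ nbhd q v || (v == a) || (v == b)]) a b ->
  exists2 n, size q + 3 <= n & exists f : 'I_n -> T, is_hole e f.
Proof.
move=> q_uniq q_ind q0 aq bq a_adj b_adj ab nab.
have Aa : [pred v | ~~ nbhd q v || (v == a) || (v == b)] a by rewrite /= eqxx orbT.
move=> /(within_induced_path esym eirr x0 Aa) [s [sa sb s_uniq As s_ind]].
have s_gt1 : 1 < size s.
  by rewrite ltnNge; apply: contra ab => s1; rewrite -sa -sb; case: (s) s1 => [|v []].
have s3 : 2 < size s.
  rewrite ltnNge; apply: contra nab => s2.
  have -> : b = nth x0 s 1 by rewrite -sb -nth_last; congr nth; lia.
  by rewrite -sa -nth0 s_ind //; lia.
have s0 : 0 < size s by lia.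
have s_last : (size s).-1 < size s by lia.
have mid i : 0 < i < (size s).-1 -> ~~ nbhd q (nth x0 s i).
  case/andP => i0 il; have hi : i < size s by lia.
  have /= := all_nthP x0 As i hi.
  rewrite -[a]sa -[b]sb -nth0 -nth_last !nth_uniq // ?s0.
  by case/orP => [/orP [// | /eqP i_0] | /eqP i_l]; lia.
have sq_uniq : uniq (s ++ q).
  rewrite cat_uniq s_uniq q_uniq andbT; apply/hasPn => v vq; apply/negP => vs.
  have hi : index v s < size s by rewrite index_mem.
  move: vq; rewrite -(nth_index x0 vs).
  have [i0|i0] := posnP (index v s); first by rewrite i0 nth0 sa (negbTE aq).
  have [il|il] := ltnP (index v s) (size s).-1.
    by move=> /(mem_nbhd e); apply/negP; apply: mid; rewrite i0 il.
  by rewrite (_ : index v s = (size s).-1) ?nth_last ?sb ?(negbTE bq) //; lia.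
have := @glue_hole s q sq_uniq s_ind q_ind s3 q0; rewrite sa sb => /(_ a_adj b_adj mid) hole.
exists (size (s ++ q)); last by exists (fun i => nth x0 (s ++ q) i).
by rewrite size_cat [size s + _]addnC leq_add2l.
Qed.

End Holes.

Section Strategy.
Variables (T : finType) (e : rel T) (k : nat) (x0 : T).
Hypotheses (esym : symmetric e) (eirr : irreflexive e).
Hypothesis no_long_hole : forall n (f : 'I_n -> T), is_hole e f -> n < k + 3.
Local Notation induced_path := (induced_path x0 e).
Local Notation nbhd := (nbhd e).
Local Notation off := (off e).

(* The cops stand on [rcons Q p]; surplus cops fall on [p], the default of [nth]. *)
Definition cops_on (Q : seq T) (p : T) : {ffun 'I_k -> T} := [ffun i : 'I_k => nth p Q i].

Lemma capture Q p r : size Q < k -> nbhd (rcons Q p) r -> cops_win e (cops_on Q p) r.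
Proof.
move=> hk /hasP [x xP xr]; set j := index x (rcons Q p).
have jk : j < k by apply: leq_trans hk; rewrite -(size_rcons Q p) index_mem.
apply: (@cw_step _ _ _ _ _ [ffun i : 'I_k => if val i == j then r else cops_on Q p i]).
- move=> i; rewrite !ffunE; case: eqP => [ij | _]; last by rewrite /step_ok eqxx.
  by rewrite -nth_rcons_default ij nth_index.
- by left; exists (Ordinal jk); rewrite ffunE eqxx.
Qed.

Definition trim Q p : seq T := if (size Q).+1 == k then behead (rcons Q p) else rcons Q p.

Lemma size_trim Q p : size Q < k -> size (trim Q p) < k.
Proof. by rewrite /trim; case: eqP => full hk; rewrite ?size_behead size_rcons; lia. Qed.

Lemma trim_subset Q p : {subset trim Q p <= rcons Q p}.
Proof. by rewrite /trim; case: ifP => _ x // /mem_behead. Qed.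

Lemma notin_rcons_adj Q p u : e p u -> ~~ nbhd Q u -> u \notin rcons Q p.
Proof.
move=> pu Qu; rewrite mem_rcons inE negb_or; apply/andP; split.
- by apply: contraTneq pu => ->; rewrite eirr.
- by apply: contra Qu; apply: mem_nbhd.
Qed.

Lemma trim_rcons_path Q p u : uniq (rcons Q p) -> induced_path (rcons Q p) ->
  e p u -> ~~ nbhd Q u -> uniq (rcons (trim Q p) u) /\ induced_path (rcons (trim Q p) u).
Proof.
move=> P_uniq P_ind pu Qu.
have uP := notin_rcons_adj pu Qu.
have Pu_ind : induced_path (rcons (rcons Q p) u).
  by apply: induced_path_rcons => // v vQ; apply: nbhd_nonadj Qu vQ.
rewrite /trim; case: ifP => _; last by rewrite rcons_uniq uP P_uniq.
move: P_uniq uP Pu_ind; rewrite [rcons Q p]headI rcons_uniq /=.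
by move=> /andP [_ ->] /norP [_ ->] /induced_path_behead.
Qed.

Lemma cops_move_trim Q p u : size Q < k -> induced_path (rcons Q p) -> e p u ->
  cops_move e (cops_on Q p) (cops_on (trim Q p) u).
Proof.
move=> hk P_ind pu i; rewrite !ffunE -nth_rcons_default.
have ik := ltn_ord i.
rewrite /trim; case: eqP => [full | _].
- rewrite nth_behead; have [lt | ge] := ltnP i.+1 (size (rcons Q p)).
    rewrite (set_nth_default x0 _ lt) (set_nth_default x0 _ (ltnW lt)).
    by rewrite /step_ok P_ind ?eqxx ?orbT //; lia.
  rewrite [nth u _ _]nth_default // (_ : i = size Q :> nat); last by rewrite size_rcons in ge; lia.
  by rewrite nth_rcons ltnn eqxx /step_ok pu orbT.
- have [lt | ge] := ltnP i (size (rcons Q p)).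
    by rewrite (set_nth_default u p lt) /step_ok eqxx.
  by rewrite !nth_default // /step_ok pu orbT.
Qed.

Lemma no_detour_to_head Q p u p1 rest y : rcons Q p = p1 :: rest -> (size Q).+1 = k ->
  uniq (rcons Q p) -> induced_path (rcons Q p) -> e p u -> ~~ nbhd Q u ->
  e p1 y -> ~~ nbhd rest y -> ~~ step_ok e u y ->
  ~~ connect (within e [pred v | ~~ nbhd (rcons Q p) v || (v == u) || (v == y)]) u y.
Proof.
move=> eP full P_uniq P_ind pu Qu p1y ry uy; apply/negP => Cuy.
have [pQ p1r] : p \notin Q /\ p1 \notin rest.
  by move: P_uniq (P_uniq); rewrite {1}eP rcons_uniq /= => /andP [? _] /andP [].
have yP : y \notin rcons Q p.
  rewrite eP inE negb_or; apply/andP; split; first by apply: contraTneq p1y => ->; rewrite eirr.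
  by apply: contra ry; apply: mem_nbhd.
have u_adj : {in rcons Q p, forall v, e u v = (v == last x0 (rcons Q p))}.
  move=> v; rewrite last_rcons mem_rcons inE => /orP [/eqP -> | vQ]; first by rewrite esym pu eqxx.
  rewrite esym (negbTE (nbhd_nonadj Qu vQ)) (negbTE (_ : v != p)) //.
  by apply: contraNneq pQ => <-.
have y_adj : {in rcons Q p, forall v, e y v = (v == head x0 (rcons Q p))}.
  move=> v; rewrite eP /= inE => /orP [/eqP -> | vr]; first by rewrite esym p1y eqxx.
  rewrite esym (negbTE (nbhd_nonadj ry vr)) (negbTE (_ : v != p1)) //.
  by apply: contraNneq p1r => <-.
have [u_ne_y nuy] : u != y /\ ~~ e u y.
  by move: uy; rewrite /step_ok negb_or eq_sym => /andP.
have P0 : 0 < size (rcons Q p) by rewrite size_rcons.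
have [n n_ge [f hole]] :=
  detour_hole esym eirr P_uniq P_ind P0 (notin_rcons_adj pu Qu) yP u_adj y_adj u_ne_y nuy Cuy.
have := no_long_hole hole; rewrite size_rcons full in n_ge; lia.
Qed.

Lemma trim_boundary Q p u z0 z y : uniq (rcons Q p) -> induced_path (rcons Q p) ->
  e p u -> off Q z0 u -> ~~ nbhd (rcons Q p) z -> connect (off (rcons Q p)) z z0 ->
  e z y -> nbhd (rcons Q p) y -> nbhd (rcons (trim Q p) u) y.
Proof.
move=> P_uniq P_ind pu /and3P [_ Qu z0u] zP Czz0 zy yP.
rewrite /trim nbhd_rcons; case: eqP => [full | _]; last by rewrite yP orbT.
have [p1 [rest eP]] : exists p1 rest, rcons Q p = p1 :: rest by rewrite headI; do 2 eexists.
rewrite eP /=; apply/negPn/negP; rewrite negb_or => /andP [uy ry].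
have p1y : e p1 y.
  move: yP; rewrite eP nbhd_cons (negbTE ry) orbF /step_ok => /orP [/eqP yp1 | //].
  by move: zP; rewrite eP nbhd_cons /step_ok -yp1 esym zy orbT.
move/negP: (no_detour_to_head eP full P_uniq P_ind pu Qu p1y ry uy); apply.
set A := [pred v | _].
have Au : A u by rewrite /= eqxx orbT.
have Ay : A y by rewrite /= eqxx !orbT.
have off_A : forall v, ~~ nbhd (rcons Q p) v -> A v by move=> v /= ->.
have edge v w : A v -> A w -> e v w -> within e A v w by move=> *; apply/and3P.
have z0P := off_closed zP Czz0.
apply: connect_trans (connect1 (edge u z0 Au (off_A _ z0P) _)) _; first by rewrite esym.
apply: connect_trans (connect1 (edge z y (off_A _ zP) Ay zy)).
by apply: connect_within_sub off_A _; rewrite (sym_connect_sym (within_sym esym _)).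
Qed.

Definition robber_comp S r := [set x | connect (off S) r x].

Definition guarding Q p r := [/\ size Q < k, uniq (rcons Q p), induced_path (rcons Q p),
  ~~ nbhd (rcons Q p) r & exists2 w, e p w & connect (off Q) r w].

Lemma guarding_exit Q p r : guarding Q p r ->
  exists z u, [/\ connect (off (rcons Q p)) r z, off Q z u & e p u].
Proof.
case=> _ _ _ rP [w pw Cw]; set P := rcons Q p in rP *.
have wP : nbhd P w by rewrite nbhd_rcons /step_ok pw orbT.
have [z [u [Cz Cu zu _]]] :=
  connect_exit (X := [pred x | connect (off P) r x]) (connect0 _ r) Cw (contraL (off_closed rP) wP).
exists z, u; split => //.
have /and3P [_ Qu zu_edge] := zu; have zP := off_closed rP Cz.
have uP : nbhd P u.
  apply: contraNT Cu => uP /=; apply: connect_trans Cz (connect1 _).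
  by rewrite /off /within /= zP uP.
move: uP; rewrite nbhd_rcons (negbTE Qu) orbF /step_ok => /orP [/eqP up | //].
by move: zP; rewrite nbhd_rcons /step_ok -up esym zu_edge orbT.
Qed.

Lemma guarding_round Q p r : guarding Q p r -> exists u,
  cops_move e (cops_on Q p) (cops_on (trim Q p) u) /\
  forall r', step_ok e r r' -> ~~ nbhd (rcons (trim Q p) u) r' ->
    guarding (trim Q p) u r' /\
    #|robber_comp (rcons (trim Q p) u) r'| < #|robber_comp (rcons Q p) r|.
Proof.
move=> g; have [hk P_uniq P_ind rP _] := g.
have [z [u [Cz zu pu]]] := guarding_exit g.
have /and3P [_ Qu ezu] := zu.
have [Pu_uniq Pu_ind] := trim_rcons_path P_uniq P_ind pu Qu.
have off_sym S : connect_sym (off S) by apply/sym_connect_sym/within_sym.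
have bd x y : connect (off (rcons Q p)) r x -> e x y ->
    nbhd (rcons Q p) y -> nbhd (rcons (trim Q p) u) y.
  move=> Cx; apply: (trim_boundary P_uniq P_ind pu zu (off_closed rP Cx)).
  by apply: connect_trans Cz; rewrite off_sym.
exists u; split; first exact: cops_move_trim.
move=> r' rr' r'P'.
have Cr' : connect (off (rcons Q p)) r r'.
  move: rr'; rewrite /step_ok => /orP [/eqP <- | er']; first exact: connect0.
  apply: connect1; apply/and3P; split => //.
  by apply: contra r'P'; apply: bd (connect0 _ r) er'.
have comp_sub : {subset robber_comp (rcons (trim Q p) u) r' <= robber_comp (rcons Q p) r}.
  move=> x; rewrite !inE => Cx.
  apply: (connect_closed (X := connect (off (rcons Q p)) r) _ Cr' Cx) => a b Ca /and3P [_ nb ab].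
  have aP := off_closed rP Ca; have bP : ~~ nbhd (rcons Q p) b.
    by apply: contra nb; apply: bd Ca ab.
  by apply: connect_trans Ca (connect1 _); apply/and3P.
have zP' : ~~ connect (off (rcons (trim Q p) u)) r' z.
  by apply/negP => /(off_closed r'P'); rewrite nbhd_rcons /step_ok esym ezu orbT.
split.
- split => //; first exact: size_trim.
  exists z; first by rewrite esym.
  apply: connect_off_sub (@trim_subset Q p) _.
  by apply: connect_trans Cz; rewrite off_sym.
- apply: proper_card; apply/properP; split; first exact/subsetP.
  by exists z; rewrite !inE.
Qed.

Lemma guarding_win Q p r : guarding Q p r -> cops_win e (cops_on Q p) r.
Proof.
move=> g; have [n lt_n] := ubnP #|robber_comp (rcons Q p) r|.
elim: n => // n IH in Q p r lt_n g *.
have [u [move_cops next]] := guarding_round g.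
apply: (cw_step move_cops); right => r' rr'.
have [hk _ _ _ _] := g.
have [near | far] := boolP (nbhd (rcons (trim Q p) u) r').
  exact: capture (size_trim _ hk) near.
have [g' lt] := next r' rr' far.
by apply: IH g'; apply: leq_trans lt _.
Qed.

Lemma guarding_start x r : 0 < k -> connect e r x -> ~~ nbhd [:: x] r -> guarding [::] x r.
Proof.
move=> k_gt0 Crx rx; split => //.
- by move=> [|i] [|j] //= _ _; rewrite eirr.
- have rx' : r != x by apply: contra rx => /eqP ->; apply: mem_nbhd; rewrite inE.
  have xx : ~~ predC1 x x by rewrite /= eqxx.
  have [z [w [_ /negPn /eqP -> zx Crz]]] := connect_exit (X := predC1 x) rx' Crx xx.
  exists z; first by rewrite esym.
  by rewrite (eq_connect (_ : off [::] =2 e)).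
Qed.

End Strategy.

Theorem mainTheorem1 (t : nat) (T : finType) (e : rel T) :
  4 <= t ->
  simple_graph e ->
  connected_graph e ->
  (forall (n : nat) (f : 'I_n -> T), is_hole e f -> n < t) ->
  k_cops_win e (t - 3).
Proof.
move=> t_ge4 [esym eirr] [/card_gt0P [x _] conn] no_hole.
have no_long_hole n (f : 'I_n -> T) : is_hole e f -> n < t - 3 + 3.
  by rewrite subnK; [apply: no_hole | lia].
exists (cops_on (t - 3) [::] x) => r.
have [near | far] := boolP (nbhd e [:: x] r); first by apply: capture => //=; lia.
have k_gt0 : 0 < t - 3 by lia.
exact (guarding_win esym eirr no_long_hole (guarding_start x esym eirr k_gt0 (conn r x) far)).
Qed.
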